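(* Let $P$ and $P'$ be two populations with the same users, intervals $[l_i,r_i]$, speech points $p_i$, disutilities $b_i$, and initial adopters $\mathcal S_0$, differing only in personalization parameters, with $\lambda_i\ge\lambda_i'$ for all $i\in[n]$ (where $\lambda_i$ belongs to $P$ and $\lambda_i'$ to $P'$). Then $s_{\mathrm{opt}}(P)\le s_{\mathrm{opt}}(P')$.
   Context: A population consists of users $1,\dots,n$ and a set $\mathcal S_0$ of initial adopters; user $i$ has a closed interval $[l_i,r_i]$, speech point $p_i\in[l_i,r_i]$, disutility $b_i\ge0$ and personalization parameter $\lambda_i\in[0,1]$. For a set $\mathcal S\subseteq[n]$, user $i$'s utility is $u_i(\mathcal S)=\sum_{j\in\mathcal S\setminus\{i\}}\big(\mathbf 1[p_j\in[l_i,r_i]]-\lambda_ib_i\mathbf 1[p_j\notin[l_i,r_i]]\big)$. A compatible community is a set $\mathcal S$ with $u_i(\mathcal S)\ge0$ for all $i\in\mathcal S$; $s_{\mathrm{opt}}$ of a population is the maximum size of a compatible community. *)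

From mathcomp Require Import all_boot all_order all_algebra.
Set Implicit Arguments. Unset Strict Implicit. Unset Printing Implicit Defensive.
Import Order.TTheory GRing.Theory Num.Theory.
Local Open Scope ring_scope.

Record population (R : realFieldType) (n : nat) := Population {
  lft : 'I_n -> R;
  rgt : 'I_n -> R;
  pt  : 'I_n -> R;
  dis : 'I_n -> R;
  lam : 'I_n -> R;
  init : {set 'I_n}
}.

Definition valid_population (R : realFieldType) (n : nat) (P : population R n) :=
  forall i : 'I_n,
    [/\ lft P i <= pt P i, pt P i <= rgt P i, 0 <= dis P i,
        0 <= lam P i & lam P i <= 1].

Definition in_int (R : realFieldType) (n : nat) (P : population R n) (i j : 'I_n) : bool :=
  (lft P i <= pt P j) && (pt P j <= rgt P i).

Definition utility (R : realFieldType) (n : nat) (P : population R n)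
    (S : {set 'I_n}) (i : 'I_n) : R :=
  \sum_(j in S :\ i)
    ((in_int P i j)%:R - lam P i * dis P i * (~~ in_int P i j)%:R).

Definition compatible (R : realFieldType) (n : nat) (P : population R n)
    (S : {set 'I_n}) : bool :=
  [forall i in S, 0 <= utility P S i].

(* maximum size of a compatible community (the empty set is compatible) *)
Definition s_opt (R : realFieldType) (n : nat) (P : population R n) : nat :=
  \max_(S : {set 'I_n} | compatible P S) #|S|.

From mathcomp Require Import all_boot all_order all_algebra.
Import Order.TTheory GRing.Theory Num.Theory.
Local Open Scope ring_scope.

(* Lowering the personalization parameters only shrinks the penalty
   lambda_i b_i paid for each out-of-interval member, so every utility weakly
   increases, every compatible community of P stays compatible in P', and the
   maximum over a larger family of communities can only grow. *)

Section Monotonicity.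

Variables (R : realFieldType) (n : nat) (P P' : population R n).

Lemma in_int_eq :
  lft P = lft P' -> rgt P = rgt P' -> pt P = pt P' -> in_int P =2 in_int P'.
Proof. by move=> hl hr hp i j; rewrite /in_int hl hr hp. Qed.

Lemma utility_le (S : {set 'I_n}) (i : 'I_n) :
  in_int P i =1 in_int P' i ->
  lam P' i * dis P' i <= lam P i * dis P i ->
  utility P S i <= utility P' S i.
Proof.
move=> eq_int le_penalty; apply: ler_sum => j _.
by rewrite eq_int lerD2l lerN2 ler_wpM2r ?ler0n.
Qed.

Lemma compatible_le (S : {set 'I_n}) :
  (forall i, utility P S i <= utility P' S i) ->
  compatible P S -> compatible P' S.
Proof.
move=> le_u /forallP cS; apply/forallP => i; apply/implyP => iS.
exact: le_trans (implyP (cS i) iS) (le_u i).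
Qed.

Lemma s_opt_le :
  (forall S, compatible P S -> compatible P' S) -> (s_opt P <= s_opt P')%N.
Proof.
move=> sub_compat; apply/bigmax_leqP => S cS.
by rewrite /s_opt (bigD1 S) ?sub_compat ?leq_maxl.
Qed.

End Monotonicity.

Theorem proposition5 (R : realFieldType) (n : nat) (P P' : population R n) :
  valid_population P -> valid_population P' ->
  lft P = lft P' -> rgt P = rgt P' -> pt P = pt P' -> dis P = dis P' ->
  init P = init P' ->
  (forall i : 'I_n, lam P' i <= lam P i) ->
  (s_opt P <= s_opt P')%N.
Proof.
move=> vP _ hl hr hp hd _ hlam.
apply: s_opt_le => S; apply: compatible_le => i.
apply: utility_le; first exact: in_int_eq.
have [_ _ dis_ge0 _ _] := vP i.
by rewrite -hd ler_wpM2r.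
Qed.
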